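(* Let $\alpha:\mathbb{C}\to\mathbb{C}$ be an exponential automorphism, i.e. a function satisfying $\alpha(z_1+z_2)=\alpha(z_1)+\alpha(z_2)$ and $\alpha(e^z)=e^{\alpha(z)}$ for all $z,z_1,z_2\in\mathbb{C}$. Then $\alpha$ is a field automorphism of $\mathbb{C}$, i.e. $\alpha(z_1+z_2)=\alpha(z_1)+\alpha(z_2)$, $\alpha(z_1z_2)=\alpha(z_1)\alpha(z_2)$ for all $z_1,z_2\in\mathbb{C}$, and $\alpha(1)=1$. *)

From Stdlib Require Import Reals.
From Coquelicot Require Export Coquelicot.
Open Scope C_scope.

Definition Cexp (z : C) : C :=
  (exp (Re z) * cos (Im z), exp (Re z) * sin (Im z))%R.

Definition exponential_automorphism (alpha : C -> C) : Prop :=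
  (forall z1 z2 : C, alpha (z1 + z2) = alpha z1 + alpha z2) /\
  (forall z : C, alpha (Cexp z) = Cexp (alpha z)).

(* Every nonzero complex number is an exponential, and the exponential turns
   sums into products.  So if w1 = e^u1 and w2 = e^u2, then
   alpha (w1 w2) = alpha (e^(u1 + u2)) = e^(alpha u1 + alpha u2)
   = alpha w1 * alpha w2.  The factor 0 is handled by alpha 0 = 0, which
   follows from additivity, and alpha 1 = alpha (e^0) = e^(alpha 0) = 1. *)

From Stdlib Require Import Reals Lra Psatz.
From Coquelicot Require Import Coquelicot.
Open Scope C_scope.

Lemma additive_map_0 {G H : AbelianGroup} (f : G -> H) :
  (forall x y, f (plus x y) = plus (f x) (f y)) -> f zero = zero.
Proof.
  intros f_add. apply (plus_reg_r (f zero)).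
  rewrite <- f_add, !plus_zero_l. reflexivity.
Qed.

Lemma unit_circle_cos_sin (x y : R) :
  (x * x + y * y = 1)%R -> exists t, cos t = x /\ sin t = y.
Proof.
  intros unit_xy.
  assert (x_bound : (-1 <= x <= 1)%R) by nra.
  assert (sqrt_y : sqrt (1 - x²) = Rabs y).
  { replace (1 - x²)%R with (y²) by (unfold Rsqr; lra). apply sqrt_Rsqr_abs. }
  destruct (Rle_dec 0 y) as [y_ge0 | y_lt0].
  - exists (acos x). split; [apply cos_acos; lra |].
    rewrite sin_acos, sqrt_y by lra. apply Rabs_right; lra.
  - exists (- acos x)%R. split; [rewrite cos_neg; apply cos_acos; lra |].
    rewrite sin_neg, sin_acos, sqrt_y by lra. rewrite Rabs_left; lra.
Qed.

Lemma Cexp_plus (a b : C) : Cexp (a + b) = Cexp a * Cexp b.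
Proof.
  destruct a as [a1 a2], b as [b1 b2]. unfold Cexp, Cplus, Cmult; simpl.
  rewrite exp_plus, cos_plus, sin_plus. f_equal; ring.
Qed.

Lemma Cexp_0 : Cexp 0 = 1.
Proof.
  unfold Cexp; simpl. rewrite exp_0, cos_0, sin_0.
  apply injective_projections; simpl; ring.
Qed.

Lemma Cexp_surjective (w : C) : w <> 0 -> exists z, Cexp z = w.
Proof.
  intros w_neq0. destruct w as [x y].
  set (r := Cmod (x, y)).
  assert (r_gt0 : (0 < r)%R) by (apply Cmod_gt_0; exact w_neq0).
  assert (r_sqr : (r * r = x * x + y * y)%R).
  { unfold r, Cmod; simpl. rewrite sqrt_sqrt by nra. ring. }
  destruct (unit_circle_cos_sin (x / r) (y / r)) as [t [cos_t sin_t]].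
  { replace (x / r * (x / r) + y / r * (y / r))%R
      with ((x * x + y * y) / (r * r))%R by (field; lra).
    rewrite <- r_sqr. field. lra. }
  exists (ln r, t). unfold Cexp; simpl.
  rewrite exp_ln, cos_t, sin_t by lra.
  apply injective_projections; simpl; field; lra.
Qed.

Section ExponentialAutomorphism.

Variable alpha : C -> C.
Hypothesis alpha_plus : forall z1 z2 : C, alpha (z1 + z2) = alpha z1 + alpha z2.
Hypothesis alpha_Cexp : forall z : C, alpha (Cexp z) = Cexp (alpha z).

Lemma exp_automorphism_0 : alpha 0 = 0.
Proof. exact (@additive_map_0 C_AbelianGroup C_AbelianGroup alpha alpha_plus). Qed.

Lemma exp_automorphism_1 : alpha 1 = 1.
Proof. rewrite <- Cexp_0 at 1. rewrite alpha_Cexp, exp_automorphism_0. exact Cexp_0. Qed.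

Lemma exp_automorphism_mult (z1 z2 : C) : alpha (z1 * z2) = alpha z1 * alpha z2.
Proof.
  destruct (Ceq_dec z1 0) as [-> | z1_neq0].
  { rewrite Cmult_0_l, exp_automorphism_0, Cmult_0_l. reflexivity. }
  destruct (Ceq_dec z2 0) as [-> | z2_neq0].
  { rewrite Cmult_0_r, exp_automorphism_0, Cmult_0_r. reflexivity. }
  destruct (Cexp_surjective z1 z1_neq0) as [u1 <-].
  destruct (Cexp_surjective z2 z2_neq0) as [u2 <-].
  rewrite <- Cexp_plus, !alpha_Cexp, alpha_plus. apply Cexp_plus.
Qed.

End ExponentialAutomorphism.

Theorem mainTheorem3 (alpha : C -> C) :
  exponential_automorphism alpha ->
  (forall z1 z2 : C, alpha (z1 + z2) = alpha z1 + alpha z2) /\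
  (forall z1 z2 : C, alpha (z1 * z2) = alpha z1 * alpha z2) /\
  alpha 1 = 1.
Proof.
  intros [alpha_plus alpha_Cexp].
  split; [exact alpha_plus |].
  split.
  - exact (exp_automorphism_mult alpha alpha_plus alpha_Cexp).
  - exact (exp_automorphism_1 alpha alpha_plus alpha_Cexp).
Qed.
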